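(* In the setting below, the map $\varphi:B\to \mathcal A$ defined by $\varphi(a_g\delta_g\#v_h)=a_g\otimes u_g\otimes v_h$ ($a_g\in E_g$) is a homomorphism of $K$-algebras, and there is an exact sequence of $K$-algebras $$0\longrightarrow D\longrightarrow B\xrightarrow{\ \varphi\ }\varphi(C)\longrightarrow 0,$$ where $\varphi(B)=\varphi(C)$ and $\ker\varphi=D$. In particular $\varphi$ restricts to an injective algebra homomorphism on $C$, and $B_0$ is isomorphic to a subalgebra of $\mathcal A$.
   Context: Groupoid conventions. A groupoid is a small category with all morphisms invertible, regarded as the set $G$ of morphisms. For $g\in G$ we have $d(g)=g^{-1}g$ and $r(g)=gg^{-1}$. The product $gh$ is defined iff $d(g)=r(h)$, and then $d(gh)=d(h)$, $r(gh)=r(g)$. $G^2=\{(g,h): d(g)=r(h)\}$, and $G_0$ is the set of identities. Actions. An action of $G$ on a ring $R$ is a pair $\beta=(\{E_g\},\{\beta_g\})$ where each $E_g=E_{r(g)}$ is an ideal of $R$, each $\beta_g:E_{g^{-1}}\to E_g$ is a ring isomorphism, $\beta_e=\mathrm{id}$ for $e\in G_0$, and $\beta_g\beta_h=\beta_{gh}$ on $E_{h^{-1}}$ for $(g,h)\in G^2$. Setting. $K$ is a commutative unital ring and $G$ is a finite groupoid. $R$ is a unital $K$-algebra with an action $\beta$ of $G$ by $K$-linear maps such that each $E_e$, $e\in G_0$, has an identity $1_e$, and $R=\bigoplus_{e\in G_0}E_e$. Put $1_g=1_{r(g)}$. Skew groupoid ring and $B$: - $R\star_\beta G=\bigoplus_g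 E_g\delta_g$ with $(x\delta_g)(y\delta_h)=x\beta_g(y)\delta_{gh}$ if $(g,h)\in G^2$ and $0$ otherwise; it is $G$-graded with $g$-component $E_g\delta_g$. - $KG^*$ has $K$-basis $\{v_g\}$ with $v_gv_h=\delta_{g,h}v_g$; it acts on $G$-graded algebras by $v_h\cdot a=a_h$ (the $h$-component). - $B=(R\star_\beta G)\#KG^*=\bigoplus_{g,h}E_g\delta_g\#v_h$, with $(x\#v_g)(y\#v_h)=x(v_{gh^{-1}}\cdot y)\#v_h$ if $d(g)=d(h)$, and $0$ otherwise. - $C=\bigoplus_{d(g)=r(h)}E_g\delta_g\#v_h$, $D=\bigoplus_{d(g)\neq r(h)}E_g\delta_g\#v_h$, and $B_0=\bigoplus_{d(g)=r(g)=r(h)}E_g\delta_g\#v_h$. Weak bialgebras $KG$ and $KG^*$: - $KG$ has basis $\{u_g\}$, $u_gu_h=u_{gh}$ if $d(g)=r(h)$ (else $0$), $1=\sum_{e\in G_0}u_e$, $\Delta(u_g)=u_g\otimes u_g$, $\varepsilon(u_g)=1$, and antipode $S(u_g)=u_{g^{-1}}$. - $KG^*$ has $\Delta(v_g)=\sum_{d(h)=d(g)}v_{gh^{-1}}\otimes v_h$, $\varepsilon(\sum a_gv_g)=\sum_{e\in G_0}a_e$, and antipode $S(v_g)=v_{g^{-1}}$. - For a weak bialgebra $H$, $\varepsilon_t(x)=\sum\varepsilon(1_{(1)}x)1_{(2)}$ and $H_t=\varepsilon_t(H)$. One has $KG_t=\bigoplus_{e\in G_0}Ku_e$ and $KG^*_t=\sum_{e\in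 G_0}K\sum_{h: r(h)=e}v_h$. The algebra $\mathcal A$: - $R$ is a $KG$-module algebra via $u_g\cdot r=\beta_g(r1_{g^{-1}})$, and a right $KG_t$-module via $r\cdot z=S(z)\cdot r$; $KG$ is a left $KG_t$-module by multiplication. - $X=R\otimes_{KG_t}KG$ is a unital $K$-algebra with $(r\otimes u_g)(s\otimes u_h)=r(u_g\cdot s)\otimes u_gu_h$. - $X$ is a $KG^*$-module algebra via $v_k\cdot(r\otimes u_g)=\delta_{k,g}\,r\otimes u_g$, and a right $KG^*_t$-module via $x\cdot z=S(z)\cdot x$; $KG^*$ is a left $KG^*_t$-module by multiplication. - $\mathcal A=X\otimes_{KG^*_t}KG^*$ is the unital $K$-algebra with $(x\otimes v_g)(y\otimes v_h)=x(v_{gh^{-1}}\cdot y)\otimes v_h$ if $d(g)=d(h)$ and $0$ otherwise, and identity $1_R\otimes1_{KG}\otimes1_{KG^*}$. Elements of $\mathcal A$ are written $r\otimes u_g\otimes v_h$. *)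

From HB Require Import structures.
From mathcomp Require Import all_boot all_order all_algebra.
Set Implicit Arguments. Unset Strict Implicit. Unset Printing Implicit Defensive.
Import GRing.Theory.
Local Open Scope ring_scope.

(* A finite groupoid, regarded as its (finite) set of morphisms, with
   domain [dom] (d(g) = g^-1 g), codomain [cod] (r(g) = g g^-1), a
   composition [gmul g h] (meaningful when dom g = cod h) and inverse. *)
Record groupoid := Groupoid {
  gT :> finType;
  dom : gT -> gT;
  cod : gT -> gT;
  gmul : gT -> gT -> gT;
  ginv : gT -> gT;
  dom_dom : forall g, dom (dom g) = dom g;
  cod_dom : forall g, cod (dom g) = dom g;
  dom_cod : forall g, dom (cod g) = cod g;
  cod_cod : forall g, cod (cod g) = cod g;
  dom_gmul : forall g h, dom g = cod h -> dom (gmul g h) = dom h;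
  cod_gmul : forall g h, dom g = cod h -> cod (gmul g h) = cod g;
  gmulA : forall g h k, dom g = cod h -> dom h = cod k ->
            gmul g (gmul h k) = gmul (gmul g h) k;
  gmul_cod : forall g, gmul (cod g) g = g;
  gmul_dom : forall g, gmul g (dom g) = g;
  dom_ginv : forall g, dom (ginv g) = cod g;
  cod_ginv : forall g, cod (ginv g) = dom g;
  gmulVg : forall g, gmul (ginv g) g = dom g;
  gmulgV : forall g, gmul g (ginv g) = cod g
}.

Definition isId (G : groupoid) (e : G) : bool := dom e == e.

Section Setting.
Variables (K : comPzRingType) (R : algType K) (G : groupoid).

(* E g : the ideal E_g (a predicate on R); beta g : the map beta_g
   (a total function, only meaningful on E_{g^-1}); one e : the identity 1_e. *)
Definition is_ideal (I : pred R) : Prop :=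
  0 \in I /\ (forall x y, x \in I -> y \in I -> x - y \in I) /\
  (forall a x, x \in I -> a * x \in I) /\ (forall a x, x \in I -> x * a \in I) /\
  (forall (k : K) x, x \in I -> k *: x \in I).

Definition setting (E : G -> pred R) (beta : G -> R -> R) (one : G -> R) : Prop :=
  (forall g, is_ideal (E g)) /\
  (forall g x, (x \in E g) = (x \in E (cod g))) /\
  (forall g x, x \in E (ginv g) -> beta g x \in E g) /\
  (forall g x y, x \in E (ginv g) -> y \in E (ginv g) -> beta g (x + y) = beta g x + beta g y) /\
  (forall g x y, x \in E (ginv g) -> y \in E (ginv g) -> beta g (x * y) = beta g x * beta g y) /\
  (forall g (k : K) x, x \in E (ginv g) -> beta g (k *: x) = k *: beta g x) /\
  (forall g x y, x \in E (ginv g) -> y \in E (ginv g) -> beta g x = beta g y -> x = y) /\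
  (forall g y, y \in E g -> exists2 x, x \in E (ginv g) & beta g x = y) /\
  (forall e x, isId e -> x \in E e -> beta e x = x) /\
  (forall g h x, dom g = cod h -> x \in E (ginv h) -> beta g (beta h x) = beta (gmul g h) x) /\
  (forall e, isId e -> one e \in E e /\ (forall x, x \in E e -> one e * x = x /\ x * one e = x)) /\
  (* R = (+)_{e in G_0} E_e  (internal direct sum) *)
  (forall x, exists f : G -> R, (forall e, isId e -> f e \in E e) /\
                                x = \sum_(e | isId e) f e) /\
  (forall f : G -> R, (forall e, isId e -> f e \in E e) ->
     \sum_(e | isId e) f e = 0 -> forall e, isId e -> f e = 0).

(* An element  sum_g x_g delta_g  of R *_beta G is a function g |-> x_g
   (with x_g in E_g); an element  sum_{g,h} x_{g,h} delta_g # v_h  of B is a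
   function (g,h) |-> x_{g,h} (with x_{g,h} in E_g). *)
Definition skew := {ffun G -> R}.
Definition Belt := {ffun G * G -> R}.

Definition inB (E : G -> pred R) (b : Belt) : Prop := forall g h, b (g, h) \in E g.

(* (x delta_k)(y delta_l) = x beta_k(y) delta_{kl} if d(k) = r(l), else 0 *)
Definition skew_mul (beta : G -> R -> R) (x y : skew) : skew :=
  [ffun m => \sum_(k : G) \sum_(l : G | (dom k == cod l) && (gmul k l == m))
                x k * beta k (y l)].

(* v_h . a = a_h, the h-homogeneous component of a G-graded element *)
Definition vact_skew (h : G) (x : skew) : skew := [ffun m => if m == h then x m else 0].

Definition Bcomp (b : Belt) (h : G) : skew := [ffun g => b (g, h)].

(* (x # v_g)(y # v_h) = x (v_{gh^-1} . y) # v_h if d(g) = d(h), else 0 *)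
Definition B_mul (beta : G -> R -> R) (b b' : Belt) : Belt :=
  [ffun p => let: (m, h) := p in
     \sum_(g : G | dom g == dom h)
        skew_mul beta (Bcomp b g) (vact_skew (gmul g (ginv h)) (Bcomp b' h)) m].

Definition inC (E : G -> pred R) (b : Belt) : Prop :=
  inB E b /\ forall g h, dom g != cod h -> b (g, h) = 0.
Definition inD (E : G -> pred R) (b : Belt) : Prop :=
  inB E b /\ forall g h, dom g = cod h -> b (g, h) = 0.
Definition inB0 (E : G -> pred R) (b : Belt) : Prop :=
  inB E b /\ forall g h, ~ (dom g = cod g /\ cod g = cod h) -> b (g, h) = 0.

(* Since KG and KG^* are free K-modules on {u_g} and {v_h}, the K-module
   R (x)_K KG (x)_K KG^* is identified with functions (g,h) |-> r_{g,h}
   (the element  sum r_{g,h} (x) u_g (x) v_h).  A is its quotient by the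
   K-submodule [Nrel] spanned by the balancing relations over KG_t and KG^*_t. *)
Definition Arep := {ffun G * G -> R}.

(* r (x) u_g (x) v_h *)
Definition tens (r : R) (g h : G) : Arep := [ffun p => if p == (g, h) then r else 0].

(* KG-module algebra structure of R: u_g . r = beta_g (r 1_{g^-1}) *)
Definition uact (beta : G -> R -> R) (one : G -> R) (g : G) (r : R) : R :=
  beta g (r * one (cod (ginv g))).

(* Balancing over KG_t = span{u_e, e in G_0}:
   (r . u_e) (x) u_g (x) v_h - r (x) (u_e u_g) (x) v_h,
   where r . u_e = S(u_e) . r = u_{e^-1} . r  and  u_e u_g = u_{eg} if d(e)=r(g), else 0. *)
Definition rel1 beta one (r : R) (e g h : G) : Arep :=
  tens (uact beta one (ginv e) r) g h -
  (if dom e == cod g then tens r (gmul e g) h else 0).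

(* Balancing over KG^*_t = span{w_e = sum_{r(k)=e} v_k, e in G_0}:
   (x . w_e) (x) v_h - x (x) (w_e v_h), with x = r (x) u_g,
   x . w_e = S(w_e) . x = sum_{r(k)=e} v_{k^-1} . x,
   v_j . (r (x) u_g) = delta_{j,g} r (x) u_g,  and  w_e v_h = sum_{r(k)=e} v_k v_h. *)
Definition rel2 (r : R) (e g h : G) : Arep :=
  \sum_(k : G | cod k == e) (if ginv k == g then tens r g h else 0) -
  \sum_(k : G | cod k == e) (if k == h then tens r g k else 0).

Inductive Nrel beta one : Arep -> Prop :=
| Nrel0 : Nrel beta one 0
| NrelD x y : Nrel beta one x -> Nrel beta one y -> Nrel beta one (x + y)
| NrelZ (k : K) x : Nrel beta one x -> Nrel beta one (k *: x)
| Nrel1 r e g h : isId e -> Nrel beta one (rel1 beta one r e g h)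
| Nrel2 r e g h : isId e -> Nrel beta one (rel2 r e g h).

Definition Aeq beta one (x y : Arep) : Prop := Nrel beta one (x - y).

(* multiplication on X = R (x) KG:  (r (x) u_g)(s (x) u_h) = r (u_g . s) (x) u_g u_h *)
Definition Xmul beta one (x y : {ffun G -> R}) : {ffun G -> R} :=
  [ffun m => \sum_(g : G) \sum_(h : G | (dom g == cod h) && (gmul g h == m))
                x g * uact beta one g (y h)].

(* KG^*-action on X: v_k . (r (x) u_g) = delta_{k,g} r (x) u_g *)
Definition vact_X (k : G) (x : {ffun G -> R}) : {ffun G -> R} :=
  [ffun m => if m == k then x m else 0].

Definition Acomp (a : Arep) (h : G) : {ffun G -> R} := [ffun g => a (g, h)].

(* multiplication on A: (x (x) v_g)(y (x) v_h) = x (v_{gh^-1} . y) (x) v_h if d(g)=d(h), else 0 *)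
Definition A_mul beta one (a a' : Arep) : Arep :=
  [ffun p => let: (m, h) := p in
     \sum_(g : G | dom g == dom h)
        Xmul beta one (Acomp a g) (vact_X (gmul g (ginv h)) (Acomp a' h)) m].

(** * The map phi : B -> A,  a_g delta_g # v_h |-> a_g (x) u_g (x) v_h *)
Definition phi (b : Belt) : Arep := [ffun p => b p].

End Setting.

From HB Require Import structures.
From mathcomp Require Import all_boot all_order all_algebra.
Import GRing.Theory.
Set Implicit Arguments. Unset Strict Implicit.
Local Open Scope ring_scope.

(* On representatives the map phi is the identity
   (x_{g,h} delta_g # v_h |-> x_{g,h} (x) u_g (x) v_h), so additivity and
   K-linearity hold on the nose, and multiplicativity reduces to the fact that
   u_k . y = beta_k(y 1_{d(k)}) = beta_k(y) whenever y lies in E_l with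
   d(k) = r(l).  Everything else rests on a description of the balancing
   submodule N (the kernel of the quotient map onto A):
   - every element a of N satisfies a(g,h) 1_{r(g)} = 0 whenever d(g) = r(h)
     (checked on the generators, using that the 1_e are orthogonal idempotents);
   - every representative supported on {d(g) <> r(h)} lies in N (it is a sum
     of generators of the second kind).
   Together these say that, restricted to B, the kernel of phi is exactly D.
   Projecting onto the components with d(g) = r(h) then shows phi(B) = phi(C)
   and that phi is injective on C; finally B_0 is a subalgebra of B contained
   in C, hence embedded in A. *)

Lemma ginvK (G : groupoid) (g : G) : ginv (ginv g) = g.
Proof.
have dx : dom (ginv (ginv g)) = dom g by rewrite dom_ginv cod_ginv.
rewrite -[LHS]gmul_dom dx -(gmulVg g) gmulA; last by rewrite dom_ginv.
  by rewrite gmulVg dom_ginv gmul_cod.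
by rewrite dx cod_ginv.
Qed.

Lemma cod_id (G : groupoid) (e : G) : isId e -> cod e = e.
Proof. by move/eqP=> de; rewrite -de cod_dom. Qed.

Lemma ginv_id (G : groupoid) (e : G) : isId e -> ginv e = e.
Proof.
move=> He; rewrite -[LHS]gmul_dom dom_ginv cod_id // gmulVg.
exact/eqP.
Qed.

Lemma isId_cod (G : groupoid) (g : G) : isId (cod g).
Proof. by rewrite /isId dom_cod. Qed.

Lemma isId_dom (G : groupoid) (g : G) : isId (dom g).
Proof. by rewrite /isId dom_dom. Qed.

(* The two sums occurring in the balancing relations over KG^*_t:
   the only k with r(k) = e and k^-1 = g is g^-1, present iff d(g) = e. *)
Lemma sum_cod_ginv (G : groupoid) (V : zmodType) (e g : G) (x : V) :
  \sum_(k : G | cod k == e) (if ginv k == g then x else 0) =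
  if dom g == e then x else 0.
Proof.
case: ifP => He.
  rewrite (bigD1 (ginv g)) /=; last by rewrite cod_ginv.
  rewrite ginvK eqxx big1 ?addr0 // => k /andP[_ Hk].
  by case: eqP => // Hkg; rewrite -Hkg ginvK eqxx in Hk.
apply: big1 => k /eqP Hk; case: eqP => // Hkg.
by rewrite -Hkg dom_ginv Hk eqxx in He.
Qed.

Lemma sum_cod_eq (G : groupoid) (V : zmodType) (e h : G) (F : G -> V) :
  \sum_(k : G | cod k == e) (if k == h then F k else 0) =
  if cod h == e then F h else 0.
Proof.
case: ifP => He.
  rewrite (bigD1 h) //= eqxx big1 ?addr0 // => k /andP[_ Hk].
  by rewrite (negbTE Hk).
apply: big1 => k /eqP Hk; case: eqP => // Hkg.
by rewrite -Hkg Hk eqxx in He.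
Qed.

Section Ideal.
Variables (K : comPzRingType) (R : algType K) (I : pred R).
Hypothesis idealI : is_ideal I.

Lemma ideal0 : 0 \in I. Proof. by case: idealI. Qed.

Lemma idealB x y : x \in I -> y \in I -> x - y \in I.
Proof. by case: idealI => _ [H _]; apply: H. Qed.

Lemma idealMl a x : x \in I -> a * x \in I.
Proof. by case: idealI => _ [_ [H _]]; apply: H. Qed.

Lemma idealMr a x : x \in I -> x * a \in I.
Proof. by case: idealI => _ [_ [_ [H _]]]; apply: H. Qed.

Lemma idealZ (k : K) x : x \in I -> k *: x \in I.
Proof. by case: idealI => _ [_ [_ [_ H]]]; apply: H. Qed.

Lemma idealD x y : x \in I -> y \in I -> x + y \in I.
Proof.
move=> Hx Hy; rewrite -[y]opprK -[- y]sub0r.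
by apply: idealB => //; apply: idealB => //; apply: ideal0.
Qed.

Lemma ideal_sum (T : finType) (P : pred T) (F : T -> R) :
  (forall i, P i -> F i \in I) -> \sum_(i | P i) F i \in I.
Proof.
move=> HF; apply: (big_ind (fun x => x \in I)) => //; first exact: ideal0.
exact: idealD.
Qed.

End Ideal.

Lemma tens_sum (K : comPzRingType) (R : algType K) (G : groupoid) (x : Arep R G) :
  x = \sum_(p : G * G) tens (x p) p.1 p.2.
Proof.
apply/ffunP => q; rewrite sum_ffunE (bigD1 q) //= big1 ?addr0.
  by rewrite ffunE -surjective_pairing eqxx.
by move=> p Hp; rewrite ffunE -surjective_pairing eq_sym (negbTE Hp).
Qed.

Lemma phiE (K : comPzRingType) (R : algType K) (G : groupoid) (b : Belt R G) :
  phi b = b.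
Proof. by apply/ffunP => p; rewrite ffunE. Qed.

Lemma Aeq_refl (K : comPzRingType) (R : algType K) (G : groupoid)
  (beta : G -> R -> R) (one : G -> R) (x : Arep R G) : Aeq beta one x x.
Proof. by rewrite /Aeq subrr; apply: Nrel0. Qed.

Lemma rel2E (K : comPzRingType) (R : algType K) (G : groupoid) (r : R) (e g h : G) p :
  rel2 r e g h p =
  if p == (g, h) then (if dom g == e then r else 0) - (if cod h == e then r else 0)
  else 0.
Proof.
rewrite /rel2 sum_cod_ginv sum_cod_eq ffunE.
by do 2 case: ifP => _; rewrite ?ffunE; case: eqP; rewrite ?subr0.
Qed.

(* Every representative supported on D, i.e. on {(g,h) | d(g) <> r(h)}, is
   zero in A: each of its tensors is the relation rel2 for e = d(g). *)
Lemma Nrel_of_D (K : comPzRingType) (R : algType K) (G : groupoid)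
  (beta : G -> R -> R) (one : G -> R) (a : Arep R G) :
  (forall g h, dom g = cod h -> a (g, h) = 0) -> Nrel beta one a.
Proof.
move=> Ha; rewrite (tens_sum a).
apply: (big_ind (Nrel beta one)); [exact: Nrel0 | by move=> ? ?; apply: NrelD |].
case=> g h _ /=.
have [Hgh|Hne] := eqVneq (dom g) (cod h).
  have -> : tens (a (g, h)) g h = 0.
    by apply/ffunP => p; rewrite !ffunE Ha //; case: ifP.
  exact: Nrel0.
have <- : rel2 (a (g, h)) (dom g) g h = tens (a (g, h)) g h.
  by apply/ffunP => p; rewrite rel2E ffunE eqxx (eq_sym (cod h)) (negbTE Hne) subr0.
exact/Nrel2/isId_dom.
Qed.

Section Setting.
Variables (K : comPzRingType) (R : algType K) (G : groupoid).
Variables (E : G -> pred R) (beta : G -> R -> R) (one : G -> R).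
Hypothesis HS : setting E beta one.

Lemma E_ideal g : is_ideal (E g).
Proof. by case: HS. Qed.

Lemma E_cod g x : (x \in E g) = (x \in E (cod g)).
Proof. by case: HS => _ [H _]; apply: H. Qed.

Lemma beta_add g x y : x \in E (ginv g) -> y \in E (ginv g) ->
  beta g (x + y) = beta g x + beta g y.
Proof. by case: HS => _ [_ [_ [H _]]]; apply: H. Qed.

Lemma beta_id e x : isId e -> x \in E e -> beta e x = x.
Proof. by case: HS => _ [_ [_ [_ [_ [_ [_ [_ [H _]]]]]]]]; apply: H. Qed.

Lemma one_in e : isId e -> one e \in E e.
Proof. by case: HS => _ [_ [_ [_ [_ [_ [_ [_ [_ [_ [H _]]]]]]]]]] /H []. Qed.

Lemma one_unit e x : isId e -> x \in E e -> one e * x = x /\ x * one e = x.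
Proof. by case: HS => _ [_ [_ [_ [_ [_ [_ [_ [_ [_ [H _]]]]]]]]]] /H [_]; apply. Qed.

Lemma sum_E_uniq (f : G -> R) : (forall e, isId e -> f e \in E e) ->
  \sum_(e | isId e) f e = 0 -> forall e, isId e -> f e = 0.
Proof. by case: HS => _ [_ [_ [_ [_ [_ [_ [_ [_ [_ [_ [_ H]]]]]]]]]]]; apply: H. Qed.

Lemma beta0 g : beta g 0 = 0.
Proof.
have H0 := ideal0 (E_ideal (ginv g)).
have := beta_add H0 H0; rewrite addr0 => H.
by apply: (addrI (beta g 0)); rewrite addr0 -H.
Qed.

Lemma E_disjoint e e' x : isId e -> isId e' -> e != e' ->
  x \in E e -> x \in E e' -> x = 0.
Proof.
move=> He He' Hne Hx Hx'.
pose f i := if i == e then x else if i == e' then - x else 0.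
have Hf i : isId i -> f i \in E i.
  move=> _; rewrite /f; case: eqP => [->//|_]; case: eqP => [->|_].
    by rewrite -sub0r; apply: (idealB (E_ideal e')) => //; apply: (ideal0 (E_ideal e')).
  exact: (ideal0 (E_ideal _)).
have Hsum : \sum_(i | isId i) f i = 0.
  rewrite (bigD1 e) //= (bigD1 e') /=; last by rewrite He' eq_sym.
  rewrite big1 => [|i /andP[/andP[_ H1] H2]]; last by rewrite /f (negbTE H1) (negbTE H2).
  by rewrite /f eqxx eq_sym (negbTE Hne) eqxx addr0 subrr.
by have := sum_E_uniq Hf Hsum He; rewrite /f eqxx.
Qed.

Lemma one_idem e : isId e -> one e * one e = one e.
Proof. by move=> He; case: (one_unit He (one_in He)). Qed.

Lemma one_orth e e' : isId e -> isId e' -> e != e' -> one e * one e' = 0.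
Proof.
move=> He He' Hne; apply: (E_disjoint He He' Hne).
  exact: (idealMr (E_ideal e) _ (one_in He)).
exact: (idealMl (E_ideal e') _ (one_in He')).
Qed.

Lemma E_one g x : x \in E g -> x * one (cod g) = x.
Proof. by rewrite E_cod => Hx; case: (one_unit (isId_cod g) Hx). Qed.

(* The balancing relations over KG_t are single tensors: since r . u_e = r 1_e
   and u_e u_g = u_g when e = r(g) (and 0 otherwise), rel1 r e g h is
   (r 1_e - [e = r(g)] r) (x) u_g (x) v_h. *)
Lemma rel1E r e g h p : isId e ->
  rel1 beta one r e g h p =
  if p == (g, h) then r * one e - (if e == cod g then r else 0) else 0.
Proof.
move=> He; have de : dom e = e by apply/eqP.
rewrite /rel1 /uact ginvK ginv_id // cod_id // beta_id //; last first.
  exact: (idealMl (E_ideal e) _ (one_in He)).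
rewrite de; case: eqP => [->|_]; rewrite ?gmul_cod !ffunE;
  by case: eqP; rewrite ?subr0.
Qed.

Lemma Nrel_vanish (a : Arep R G) : Nrel beta one a ->
  forall g h, dom g = cod h -> a (g, h) * one (cod g) = 0.
Proof.
elim=> {a}.
- by move=> g h _; rewrite ffunE mul0r.
- by move=> x y _ Hx _ Hy g h Hgh; rewrite ffunE mulrDl Hx ?Hy ?addr0.
- by move=> k x _ Hx g h Hgh; rewrite ffunE -scalerAl Hx ?scaler0.
- move=> r e g' h' He g h _; rewrite rel1E //.
  case: eqP => [[-> _]|_]; last by rewrite mul0r.
  case: eqP => [->|Hne]; first by rewrite mulrBl -mulrA one_idem ?subrr ?isId_cod.
  by rewrite subr0 -mulrA one_orth ?mulr0 ?isId_cod //; apply/eqP.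
- move=> r e g' h' _ g h Hgh; rewrite rel2E.
  by case: eqP => [[<- <-]|_]; rewrite ?Hgh ?subrr mul0r.
Qed.

Lemma phi_mul b b' : inB E b' ->
  phi (B_mul beta b b') = A_mul beta one (phi b) (phi b').
Proof.
move=> Hb'; rewrite !phiE; apply/ffunP => -[m h]; rewrite !ffunE.
apply: eq_bigr => g _; rewrite !ffunE; apply: eq_bigr => k _.
apply: eq_bigr => l /andP[/eqP Hkl _]; rewrite !ffunE /uact cod_ginv.
congr (_ * beta k _); case: ifP => _; last by rewrite mul0r.
by rewrite Hkl E_one.
Qed.

Lemma phi_ker b : inB E b -> Aeq beta one (phi b) 0 <-> inD E b.
Proof.
move=> Hb; rewrite /Aeq phiE subr0; split=> [HN|[_ HD]]; last exact: Nrel_of_D.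
split=> // g h Hgh; rewrite -(E_one (Hb g h)).
exact: Nrel_vanish.
Qed.

Definition C_part (b : Belt R G) : Belt R G :=
  [ffun p => if dom p.1 == cod p.2 then b p else 0].

Lemma C_part_inC b : inB E b -> inC E (C_part b).
Proof.
move=> Hb; split=> [g h|g h Hne]; rewrite ffunE /=; last by rewrite (negbTE Hne).
by case: ifP => _ //; apply: (ideal0 (E_ideal g)).
Qed.

(* phi(B) = phi(C): b and its C-component differ by an element of D. *)
Lemma phi_C_part b : Aeq beta one (phi b) (phi (C_part b)).
Proof.
rewrite /Aeq !phiE; apply: Nrel_of_D => g h Hgh.
by rewrite !ffunE /= Hgh eqxx subrr.
Qed.

(* phi is injective on C, since C meets the kernel D trivially. *)
Lemma phi_inj_C c c' : inC E c -> inC E c' ->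
  Aeq beta one (phi c) (phi c') -> c = c'.
Proof.
move=> [Hc Hc0] [Hc' Hc0'] Hcc'.
have HB : inB E (c - c') by move=> g h; rewrite !ffunE; apply: (idealB (E_ideal g)).
have [_ HD] : inD E (c - c').
  by apply/(phi_ker HB); move: Hcc'; rewrite /Aeq !phiE subr0.
apply/ffunP => -[g h]; have [Hgh|Hne] := eqVneq (dom g) (cod h).
  by apply/eqP; rewrite -subr_eq0; have := HD g h Hgh; rewrite !ffunE => ->.
by rewrite Hc0 ?Hc0'.
Qed.

(* B is closed under multiplication: the (m,h)-component of a product is a
   sum of terms x_{k,g} beta_k(...) with kl = m, and x_{k,g} in E_k = E_{r(m)}. *)
Lemma B_mul_inB b b' : inB E b -> inB E (B_mul beta b b').
Proof.
move=> Hb m h; rewrite ffunE; apply: (ideal_sum (E_ideal m)) => g _.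
rewrite ffunE; apply: (ideal_sum (E_ideal m)) => k _.
apply: (ideal_sum (E_ideal m)) => l /andP[/eqP Hkl /eqP <-].
rewrite ffunE; apply: (idealMr (E_ideal _)).
by rewrite E_cod cod_gmul // -E_cod; apply: Hb.
Qed.

Lemma B0_zero b g h : inB0 E b ->
  ~~ [&& dom g == cod g & cod g == cod h] -> b (g, h) = 0.
Proof.
by move=> [_ Hb0] Hgh; apply: Hb0 => -[H1 H2]; move: Hgh; rewrite H1 H2 !eqxx.
Qed.

Lemma B0_inC b : inB0 E b -> inC E b.
Proof.
move=> Hb; split=> [|g h Hne]; first by case: Hb.
by apply: B0_zero => //; apply: contra Hne => /andP[/eqP -> /eqP ->].
Qed.

Lemma B0_add b b' : inB0 E b -> inB0 E b' -> inB0 E (b + b').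
Proof.
move=> [Hb Hb0] [Hb' Hb0']; split=> [g h|g h H]; rewrite ffunE.
  exact: (idealD (E_ideal g)).
by rewrite Hb0 ?Hb0' ?addr0.
Qed.

Lemma B0_scale (k : K) b : inB0 E b -> inB0 E (k *: b).
Proof.
move=> [Hb Hb0]; split=> [g h|g h H]; rewrite ffunE; first exact: (idealZ (E_ideal g)).
by rewrite Hb0 ?scaler0.
Qed.

(* B_0 is closed under multiplication: a nonzero term x_{k,g} beta_k(y_{l,h})
   of a product forces d(k) = r(k) = r(g) and d(l) = r(l) = r(h), whence the
   product index m = kl satisfies d(m) = r(m) = r(h). *)
Lemma B0_mul b b' : inB0 E b -> inB0 E b' -> inB0 E (B_mul beta b b').
Proof.
move=> Hb Hb'; split; first by apply: B_mul_inB; case: Hb.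
move=> m h Hmh; rewrite ffunE; apply: big1 => g _.
rewrite ffunE; apply: big1 => k _; apply: big1 => l /andP[/eqP Hkl /eqP Hm].
rewrite !ffunE.
have [/andP[/eqP Hk _]|Hk] := boolP [&& dom k == cod k & cod k == cod g];
  last by rewrite (B0_zero Hb) ?mul0r.
case: ifP => _; last by rewrite beta0 mulr0.
have [/andP[/eqP Hl1 /eqP Hl2]|Hl] := boolP [&& dom l == cod l & cod l == cod h];
  last by rewrite (B0_zero Hb') ?beta0 ?mulr0.
by exfalso; apply: Hmh; rewrite -Hm dom_gmul // cod_gmul // -Hk Hkl Hl1 Hl2.
Qed.

End Setting.

Unset Implicit Arguments. Set Strict Implicit.
Theorem theorem5p2 (K : comPzRingType) (R : algType K) (G : groupoid)
  (E : G -> pred R) (beta : G -> R -> R) (one : G -> R) :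
  setting E beta one ->
  ((forall b b', inB E b -> inB E b' ->
      Aeq beta one (phi (b + b')) (phi b + phi b')) /\
   (forall (k : K) b, inB E b -> Aeq beta one (phi (k *: b)) (k *: phi b)) /\
   (forall b b', inB E b -> inB E b' ->
      Aeq beta one (phi (B_mul beta b b')) (A_mul beta one (phi b) (phi b')))) /\
  (forall b, inB E b -> (Aeq beta one (phi b) 0 <-> inD E b)) /\
  (forall b, inB E b -> exists2 c, inC E c & Aeq beta one (phi b) (phi c)) /\
  (forall c c', inC E c -> inC E c' -> Aeq beta one (phi c) (phi c') -> c = c') /\
  ((forall b b', inB0 E b -> inB0 E b' -> inB0 E (b + b') /\ inB0 E (B_mul beta b b')) /\
   (forall (k : K) b, inB0 E b -> inB0 E (k *: b)) /\
   (forall b b', inB0 E b -> inB0 E b' -> Aeq beta one (phi b) (phi b') -> b = b')).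
Proof.
move=> HS; split; [split; [|split] | split; [|split; [|split; [|split; [|split]]]]].
- by move=> b b' _ _; rewrite !phiE; apply: Aeq_refl.
- by move=> k b _; rewrite !phiE; apply: Aeq_refl.
- by move=> b b' _ Hb'; rewrite (phi_mul HS) //; apply: Aeq_refl.
- by move=> b Hb; exact: (phi_ker HS Hb).
- by move=> b Hb; exists (C_part b); [exact: (C_part_inC HS Hb) | exact: phi_C_part].
- exact: phi_inj_C HS.
- by move=> b b' Hb Hb'; split; [exact: (B0_add HS Hb Hb') | exact: (B0_mul HS Hb Hb')].
- exact: B0_scale HS.
- by move=> b b' /B0_inC Hb /B0_inC Hb'; exact: (phi_inj_C HS Hb Hb').
Qed.
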